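(* For every real $\alpha$ with $0<\alpha<1/2$ there exists a constant $C_\alpha$ such that for every positive integer $N$, \[ \max_{|a_1|^2+\cdots+|a_N|^2=1}\ \sum_{m,n\le N}\frac{a_m\overline{a_n}\,(m,n)^{2\alpha}}{(mn)^{\alpha}} \le C_\alpha N^{1-2\alpha}, \] where the maximum is over complex vectors $(a_1,\dots,a_N)$ of Euclidean norm $1$ and the sum runs over positive integers $m,n\le N$.
   Context: $(m,n)$ denotes the greatest common divisor of the positive integers $m$ and $n$. *)

From HB Require Import structures.
From mathcomp Require Import all_boot all_order all_algebra.
From mathcomp Require Import all_classical all_reals all_analysis.
From mathcomp Require Import complex.
Set Implicit Arguments. Unset Strict Implicit. Unset Printing Implicit Defensive.
Import Order.TTheory GRing.Theory Num.Theory.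
Local Open Scope ring_scope.

Definition gcd_kernel (R : realType) (alpha : R) (m n : nat) : R :=
  (gcdn m n)%:R `^ (2 * alpha) / ((m * n)%:R `^ alpha).

From HB Require Import structures.
From mathcomp Require Import all_boot all_order all_algebra.
From mathcomp Require Import all_classical all_reals all_analysis.
From mathcomp Require Import complex.
From mathcomp Require Import ring lra zify.
Import Order.TTheory GRing.Theory Num.Theory.
Local Open Scope ring_scope.
Local Open Scope complex_scope.

(* The kernel (m,n)^(2α) / (mn)^α is dominated entrywise by
   L(m,n) = Σ_(d ≤ N) B_d(m) B_d(n), where B_d(m) = [d | m] (m/d)^(-α):
   the term d = (m,n) alone equals the kernel.  Schur's test for L with the
   weights w(m) = Σ_(k ≤ N) B_k(m) k^(-1/2) bounds the form by λ Σ x_m^2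
   with λ = O(N^(1-2α)): the row sums of L against w reduce, through
   Σ_(j ≤ N) B_d(j) B_d'(j) ≤ N^(1-2α)/(1-2α) · (d,d') / (dd')^(1-α) and
   Σ_k (d,k) k^(-1-t) ≤ (1 + 1/t) τ(d) with t = 1/2 - α, to the divisor bound
   τ(d) = O(d^t).  For complex coefficients the form is real, the kernel being
   symmetric, and is bounded by its value at (|a_m|)_m. *)

Lemma size_divisors n :
  size (divisors n) = (\prod_(p <- primes n) (logn p n).+1)%N.
Proof.
rewrite /divisors prime_decompE.
elim: (primes n) => [|p ps IH]; first by rewrite big_nil.
rewrite big_cons /= -IH; move: (foldr _ _ _) => divs.
elim: (logn p n) => [|k IHk] /=; first by rewrite mul1n.
by rewrite size_merge size_cat size_map IHk; lia.
Qed.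

Lemma sum_primes_lt n m : (\sum_(p <- primes n) (p < m) <= m)%N.
Proof.
rewrite (_ : \sum_(p <- _) _ = count (fun p => p < m) (primes n))%N; last first.
  by rewrite -sum1_count [RHS]big_mkcond.
rewrite -size_filter -[leqRHS](size_iota 0).
apply: uniq_leq_size; first by rewrite filter_uniq ?primes_uniq.
by move=> p; rewrite mem_filter mem_iota => /andP[].
Qed.

Section DivisorBound.
Context {R : realType}.

Lemma powR_prod (I : Type) (r : seq I) (F : I -> R) (u : R) :
  (forall i, 0 <= F i) -> (\prod_(i <- r) F i) `^ u = \prod_(i <- r) F i `^ u.
Proof.
move=> F0; elim: r => [|i r IH]; first by rewrite !big_nil powR1.
by rewrite !big_cons powRM ?prodr_ge0 // IH.
Qed.

Lemma natrX_powR (p k : nat) (u : R) : (p ^ k)%:R `^ u = (p%:R `^ u) ^+ k.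
Proof. by rewrite natrX -powR_mulrn // powRAC powR_mulrn ?powR_ge0. Qed.

Lemma succn_le_expn (b : R) (k : nat) : 1 < b ->
  (k.+1)%:R <= (1 + (ln b)^-1) * b ^+ k.
Proof.
move=> b1; have c0 : 0 < ln b by exact: ln_gt0.
have bk : 1 + k%:R * ln b <= b ^+ k.
  by rewrite -[b in b ^+ _]lnK ?posrE ?(lt_trans ltr01) // -expRM_natl expR_ge1Dx.
apply: le_trans (ler_wpM2l _ bk); last by rewrite addr_ge0 // invr_ge0 ltW.
have -> : (1 + (ln b)^-1) * (1 + k%:R * ln b) = (k.+1)%:R + (k%:R * ln b + (ln b)^-1).
  by rewrite -natr1; field; rewrite gt_eqF.
by rewrite lerDl addr_ge0 ?mulr_ge0 ?invr_ge0 // ltW.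
Qed.

Lemma divisor_bound (u : R) : 0 < u ->
  exists D : R, forall n, (0 < n)%N -> (size (divisors n))%:R <= D * n%:R `^ u.
Proof.
move=> u0; set M := 1 + (ln (2 `^ u))^-1; set P := Num.truncn (2 `^ u^-1).
(* Primes p > P have p ^ u >= 2, so only the primes p <= P cost a factor M. *)
have b1 : 1 < 2 `^ u.
  by have := @gt0_ltr_powR R u u0 1 2; rewrite powR1; apply; rewrite ?nnegrE //=; lra.
have M1 : 1 <= M by rewrite lerDl invr_ge0 ltW // ln_gt0.
have factor_le p k : prime p -> (k.+1)%:R <= M ^+ (p <= P)%N * (p%:R `^ u) ^+ k.
  move=> pp; case: leqP => [_ | pP] /=; rewrite ?expr1 ?expr0 ?mul1r.
    apply: (le_trans (succn_le_expn _ k b1)); rewrite ler_wpM2l ?(le_trans ler01) //.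
    apply: lerXn2r; rewrite ?nnegrE ?powR_ge0 //.
    by apply: (ge0_ler_powR (ltW u0)); rewrite ?nnegrE // (ler_nat R 2) prime_gt1.
  have p2 : 2 <= p%:R `^ u.
    have : 2 `^ u^-1 < p%:R by rewrite -truncn_lt_nat ?powR_ge0.
    move/ltW/(ge0_ler_powR (ltW u0)); rewrite ?nnegrE ?powR_ge0 //.
    by rewrite -powRrM mulVf ?gt_eqF // powRr1 //; apply.
  apply: le_trans (lerXn2r _ _ _ p2); rewrite ?nnegrE //.
  by rewrite -natrX ler_nat ltn_expl.
exists (M ^+ P.+1) => n n0.
rewrite size_divisors natr_prod [X in X%:R `^ u](prod_prime_decomp n0).
rewrite prime_decompE big_map natr_prod powR_prod //=.
under [X in _ <= _ * X]eq_bigr do rewrite natrX_powR.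
apply: (@le_trans _ _ (\prod_(p <- primes n) (M ^+ (p <= P)%N * (p%:R `^ u) ^+ logn p n))).
  rewrite big_seq [leRHS]big_seq; apply: ler_prod => p.
  by rewrite mem_primes => /andP[pp _]; rewrite ler0n factor_le.
rewrite big_split prodrXr /=; apply: ler_wpM2r.
  by rewrite prodr_ge0 // => p _; rewrite exprn_ge0 ?powR_ge0.
by rewrite ler_weXn2l //; exact: (sum_primes_lt n P.+1).
Qed.
End DivisorBound.

Lemma ler_sum_telescope {R : numDomainType} {f F : nat -> R} (M : nat) :
  (forall j, f j <= F j.+1 - F j) -> \sum_(j < M) f j <= F M - F 0%N.
Proof.
move=> fF; rewrite -(telescope_sumr _ (leq0n M)) big_mkord.
by apply: ler_sum => j _; exact: fF.
Qed.

Lemma sum_multiples {V : nmodType} (f : nat -> V) (l N : nat) : (0 < l)%N ->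
  \sum_(i < N | (l %| i.+1)%N) f i.+1 = \sum_(j < N %/ l) f (l * j.+1)%N.
Proof.
move=> l0; elim: N => [|N IH]; first by rewrite div0n !big_ord0.
rewrite big_mkcond big_ord_recr /= -big_mkcond IH divnS //.
case: (boolP (l %| N.+1)%N) => [lN|_] /=; last by rewrite addr0.
rewrite add1n big_ord_recr /= (_ : (N %/ l).+1 = N.+1 %/ l)%N; last by rewrite divnS // lN.
by rewrite mulnC divnK.
Qed.

Lemma gcdn_le_sum_divisors d k : (0 < d)%N ->
  (gcdn d k <= \sum_(e <- divisors d | (e %| k)%N) e)%N.
Proof.
move=> d0; rewrite big_mkcond (bigD1_seq (gcdn d k)) ?divisors_uniq //=.
  by rewrite dvdn_gcdr leq_addr.
by rewrite -dvdn_divisors // dvdn_gcdl.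
Qed.

Section PowerSums.
Context {R : realType}.

Lemma ln_le_subr1 (x : R) : 0 < x -> ln x <= x - 1.
Proof. by move=> x0; rewrite -[X in ln X](subrKC 1) le_ln1Dx // ltrBrDl subrr. Qed.

Lemma bernoulli_powR_le (x r : R) : 0 <= x -> 0 <= r <= 1 -> x `^ r <= 1 + r * (x - 1).
Proof.
move=> x0 /andP[r0 r1]; have [->|xn0] := eqVneq x 0.
  have [->|rn0] := eqVneq r 0; first by rewrite powRr0 mul0r addr0.
  by rewrite powR0 // sub0r mulrN1 subr_ge0.
have {}x0 : 0 < x by rewrite lt0r xn0.
set c := 1 + r * (x - 1).
have c0 : 0 < c by rewrite /c (_ : _ + _ = r * x + (1 - r)); [nra | ring].
rewrite -[leRHS]lnK ?posrE // /powR gt_eqF // ler_expR.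
(* Concavity of ln: r ln x - ln c = r ln (x / c) + (1 - r) ln (1 / c)
   <= r (x / c - 1) + (1 - r) (1 / c - 1) = 0. *)
have hx : ln x - ln c <= x / c - 1 by rewrite -ln_div ?posrE // ln_le_subr1 // divr_gt0.
have h1 : - ln c <= c^-1 - 1 by rewrite -lnV ?posrE // ln_le_subr1 // invr_gt0.
have cc : c * c^-1 = 1 by rewrite mulfV // gt_eqF.
have := ler_wpM2l r0 hx; have := ler_wpM2l (_ : 0 <= 1 - r) h1.
rewrite subr_ge0 => /(_ r1); rewrite /c in cc *; nra.
Qed.

Lemma bernoulli_powR_ge (x r : R) : 0 < x -> r <= 0 -> 1 + r * (x - 1) <= x `^ r.
Proof.
move=> x0 r0; rewrite /powR gt_eqF //; apply: le_trans (expR_ge1Dx _).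
by rewrite lerD2l ler_wnM2l // ln_le_subr1.
Qed.

Lemma powR_succ_tangent (m r : R) : 0 <= m ->
  (m + 1) `^ r - r * (m + 1) `^ (r - 1) =
  (m + 1) `^ r * (1 + r * (m / (m + 1) - 1)).
Proof.
move=> m0; have b0 : 0 < m + 1 by rewrite ltr_wpDl.
by rewrite powRB ?(gt_eqF b0) ?implybT // powRr1 ?ltW //; field; rewrite gt_eqF.
Qed.

Lemma powR_concave_step (m r : R) : 0 <= m -> 0 <= r <= 1 ->
  m `^ r <= (m + 1) `^ r - r * (m + 1) `^ (r - 1).
Proof.
move=> m0 r01; have b0 : 0 < m + 1 by rewrite ltr_wpDl.
have x0 : 0 <= m / (m + 1) by rewrite divr_ge0 // ltW.
rewrite powR_succ_tangent // -[m in m `^ _](divfK (lt0r_neq0 b0)) powRM ?(ltW b0) //.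
by rewrite mulrC ler_wpM2l ?powR_ge0 // bernoulli_powR_le.
Qed.

Lemma powR_convex_step (m r : R) : 0 < m -> r <= 0 ->
  (m + 1) `^ r - r * (m + 1) `^ (r - 1) <= m `^ r.
Proof.
move=> m0 r0; have b0 : 0 < m + 1 by rewrite ltr_wpDl ?ltW.
have x0 : 0 < m / (m + 1) by rewrite divr_gt0.
rewrite powR_succ_tangent ?(ltW m0) // -[m in _ <= m `^ _](divfK (lt0r_neq0 b0)).
rewrite powRM ?(ltW b0) ?(ltW x0) // [leRHS]mulrC.
by rewrite ler_wpM2l ?powR_ge0 // bernoulli_powR_ge.
Qed.

Lemma sum_inv_powR_lt1 (s : R) (M : nat) : 0 < s < 1 ->
  \sum_(j < M) ((j.+1)%:R `^ s)^-1 <= M%:R `^ (1 - s) / (1 - s).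
Proof.
move=> /andP[s0 s1]; set r := 1 - s; have r0 : 0 < r by rewrite subr_gt0.
pose F j := j%:R `^ r / r.
have step j : ((j.+1)%:R `^ s)^-1 <= F j.+1 - F j.
  rewrite /F -mulrBl ler_pdivlMr // -natr1 mulrC lerBrDl -lerBrDr.
  rewrite -powRN (_ : - s = r - 1); last by rewrite /r; ring.
  by apply: powR_concave_step; rewrite ?ler0n ?(ltW r0) //= lerBlDl lerDr ltW.
apply: (le_trans (ler_sum_telescope M step)).
by rewrite /F powR0 ?gt_eqF // mul0r subr0.
Qed.

Lemma sum_inv_powR_gt1 (t : R) (M : nat) : 0 < t ->
  \sum_(j < M) ((j.+1)%:R `^ (1 + t))^-1 <= 1 + t^-1.
Proof.
move=> t0; case: M => [|M]; first by rewrite big_ord0 addr_ge0 ?invr_ge0 ?ltW.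
rewrite big_ord_recl /= powR1 invr1 lerD2l.
pose F j := - ((j.+1)%:R `^ (- t) / t).
have step j : ((j.+2)%:R `^ (1 + t))^-1 <= F j.+1 - F j.
  rewrite /F opprK [leRHS]addrC -mulrBl ler_pdivlMr // -natr1.
  have := @powR_convex_step (j.+1)%:R (- t) (ltr0Sn _ _) _.
  rewrite (_ : - t - 1 = - (1 + t)); last by ring.
  by rewrite !powRN oppr_le0 => /(_ (ltW t0)); lra.
apply: (le_trans (ler_sum_telescope M step)).
have : 0 <= M.+1%:R `^ (- t) / t by rewrite divr_ge0 ?powR_ge0 ?ltW.
by rewrite /F powR1 /=; lra.
Qed.

Lemma sum_inv_powR_multiples (s : R) (l N : nat) : (0 < l)%N ->
  \sum_(j < N | (l %| j.+1)%N) ((j.+1)%:R `^ s)^-1 =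
  (l%:R `^ s)^-1 * \sum_(i < N %/ l) ((i.+1)%:R `^ s)^-1.
Proof.
move=> l0; rewrite (sum_multiples (fun j => (j%:R `^ s)^-1)) // mulr_sumr.
by apply: eq_bigr => i _; rewrite natrM powRM // invfM.
Qed.

Lemma sum_inv_powR_multiples_lt1 (s : R) (l N : nat) : 0 < s < 1 -> (0 < l)%N ->
  \sum_(j < N | (l %| j.+1)%N) ((j.+1)%:R `^ s)^-1 <=
  N%:R `^ (1 - s) / (1 - s) / l%:R.
Proof.
move=> s01 l0; have [_ s1] := andP s01; have r0 : 0 < 1 - s by rewrite subr_gt0.
have lp : 0 < l%:R :> R by rewrite ltr0n.
rewrite sum_inv_powR_multiples //.
have ls0 : 0 <= (l%:R `^ s)^-1 by rewrite invr_ge0 powR_ge0.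
apply: (le_trans (ler_wpM2l ls0 (sum_inv_powR_lt1 _ (N %/ l) s01))).
have Nl : (N %/ l)%:R `^ (1 - s) <= N%:R `^ (1 - s) / l%:R `^ (1 - s).
  rewrite ler_pdivlMr ?powR_gt0 // -powRM // -natrM.
  by rewrite (ge0_ler_powR (ltW r0)) ?nnegrE // ler_nat leq_divM.
have ll : l%:R `^ s * l%:R `^ (1 - s) = l%:R.
  by rewrite -powRD ?pnatr_eq0 -?lt0n ?l0 ?implybT // addrC subrK powRr1.
have r_inv0 : 0 <= (1 - s)^-1 by rewrite invr_ge0 ltW.
apply: (le_trans (ler_wpM2l ls0 (ler_wpM2r r_inv0 Nl))).
by rewrite -{3}ll le_eqVlt; apply/predU1l; field; rewrite !gt_eqF ?powR_gt0.
Qed.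

Lemma sum_inv_powR_multiples_gt1 (t : R) (e N : nat) : 0 < t -> (0 < e)%N ->
  \sum_(k < N | (e %| k.+1)%N) ((k.+1)%:R `^ (1 + t))^-1 <= (1 + t^-1) / e%:R.
Proof.
move=> t0 e0; have ep : 0 < e%:R :> R by rewrite ltr0n.
rewrite sum_inv_powR_multiples // mulrC.
apply: ler_pM; rewrite ?sumr_ge0 ?invr_ge0 ?powR_ge0 ?sum_inv_powR_gt1 //.
by rewrite lef_pV2 ?posrE ?powR_gt0 // le1r_powR ?ler1n // lerDl ltW.
Qed.

Lemma sum_gcd_inv_powR (t : R) (N d : nat) : 0 < t -> (0 < d)%N ->
  \sum_(k < N) (gcdn d k.+1)%:R / (k.+1)%:R `^ (1 + t) <=
  (1 + t^-1) * (size (divisors d))%:R.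
Proof.
move=> t0 d0; pose w k := ((k%:R : R) `^ (1 + t))^-1.
have split_gcd (k : 'I_N) : (gcdn d k.+1)%:R * w k.+1 <=
    \sum_(e <- divisors d) (if (e %| k.+1)%N then e%:R * w k.+1 else 0).
  rewrite -big_mkcond -mulr_suml -natr_sum ler_wpM2r ?invr_ge0 ?powR_ge0 // ler_nat.
  exact: gcdn_le_sum_divisors.
apply: le_trans (ler_sum _ (fun k _ => split_gcd k)) _.
rewrite exchange_big -sum1_size natr_sum mulr_sumr [leLHS]big_seq [leRHS]big_seq.
apply: ler_sum => e.
rewrite -dvdn_divisors // => ed; have e0 := dvdn_gt0 d0 ed.
rewrite -big_mkcond -mulr_sumr mulr1.
apply: (le_trans (ler_wpM2l (ler0n _ _) (sum_inv_powR_multiples_gt1 _ _ N t0 e0))).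
by rewrite mulrCA mulfV ?mulr1 // pnatr_eq0 -lt0n.
Qed.

End PowerSums.

Lemma schur_test (R : realFieldType) (I : finType) (L : I -> I -> R) (w x : I -> R)
    (lam : R) :
  (forall i j, L i j = L j i) -> (forall i j, 0 <= L i j) -> (forall i, 0 < w i) ->
  (forall i, \sum_j L i j * w j <= lam * w i) ->
  \sum_i \sum_j x i * x j * L i j <= lam * \sum_i x i ^+ 2.
Proof.
move=> Lsym L0 w0 row.
pose S := \sum_i \sum_j L i j * (x i ^+ 2 / w i * w j).
have amgm i j : x i * x j * L i j <=
    (L i j * (x i ^+ 2 / w i * w j) + L j i * (x j ^+ 2 / w j * w i)) / 2.
  rewrite (Lsym j i) -subr_ge0.
  have -> : (L i j * (x i ^+ 2 / w i * w j) + L i j * (x j ^+ 2 / w j * w i)) / 2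
      - x i * x j * L i j = L i j * (x i * w j - x j * w i) ^+ 2 / (2 * w i * w j).
    by field; rewrite !gt_eqF.
  have wij : 0 < 2 * w i * w j by rewrite !mulr_gt0 ?w0.
  by rewrite divr_ge0 ?(ltW wij) // mulr_ge0 ?L0 ?sqr_ge0.
have sym : \sum_i \sum_j L j i * (x j ^+ 2 / w j * w i) = S by rewrite exchange_big.
have rowS : S <= lam * \sum_i x i ^+ 2.
  rewrite mulr_sumr; apply: ler_sum => i _.
  have xw : 0 <= x i ^+ 2 / w i by rewrite divr_ge0 ?sqr_ge0 ?(ltW (w0 i)).
  have -> : \sum_j L i j * (x i ^+ 2 / w i * w j) =
      x i ^+ 2 / w i * \sum_j L i j * w j.
    by rewrite mulr_sumr; apply: eq_bigr => j _; ring.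
  apply: le_trans (ler_wpM2l xw (row i)) _.
  by rewrite mulrCA divfK // lt0r_neq0.
apply: le_trans rowS.
apply: le_trans (ler_sum _ (fun i _ => ler_sum _ (fun j _ => amgm i j))) _.
under eq_bigr do rewrite -mulr_suml big_split /=.
rewrite -mulr_suml big_split /= sym -/S; lra.
Qed.

Section GcdKernel.
Context {R : realType}.
Implicit Types (al : R) (d m n N : nat).

Definition divisor_kernel al d m : R :=
  if (d %| m)%N then ((m %/ d)%:R `^ al)^-1 else 0.

Lemma divisor_kernel_ge0 al d m : 0 <= divisor_kernel al d m.
Proof. by rewrite /divisor_kernel; case: ifP; rewrite ?invr_ge0 ?powR_ge0. Qed.

Lemma divisor_kernel_dvd al d m : (0 < d)%N -> (d %| m)%N ->
  divisor_kernel al d m = d%:R `^ al / m%:R `^ al.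
Proof.
move=> d0 dm; rewrite /divisor_kernel dm -[in RHS](divnK dm) natrM.
by rewrite powRM // invfM mulrCA mulfV ?mulr1 // gt_eqF // powR_gt0 // ltr0n.
Qed.

Lemma gcd_kernelE al m n : (0 < m)%N -> (0 < n)%N ->
  gcd_kernel al m n = divisor_kernel al (gcdn m n) m * divisor_kernel al (gcdn m n) n.
Proof.
move=> m0 n0; have g0 : (0 < gcdn m n)%N by rewrite gcdn_gt0 m0.
rewrite !divisor_kernel_dvd ?dvdn_gcdl ?dvdn_gcdr // /gcd_kernel natrM powRM //.
rewrite (_ : 2 * al = al + al) ?powRD.
- by rewrite invfM; ring.
- by rewrite pnatr_eq0 -lt0n g0 implybT.
by ring.
Qed.

Lemma gcd_kernel_le_sum al N m n : (0 < m)%N -> (0 < n)%N -> (m <= N)%N ->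
  gcd_kernel al m n <= \sum_(k < N) divisor_kernel al k.+1 m * divisor_kernel al k.+1 n.
Proof.
move=> m0 n0 mN; have g0 : (0 < gcdn m n)%N by rewrite gcdn_gt0 m0.
have gN : ((gcdn m n).-1 < N)%N.
  by rewrite prednK // (leq_trans _ mN) // dvdn_leq // dvdn_gcdl.
rewrite (bigD1 (Ordinal gN)) //= prednK // gcd_kernelE // lerDl.
by apply: sumr_ge0 => k _; rewrite mulr_ge0 ?divisor_kernel_ge0.
Qed.

Lemma divisor_kernelM al d d' j : (0 < d)%N -> (0 < d')%N -> (0 < j)%N ->
  divisor_kernel al d j * divisor_kernel al d' j =
  if (lcmn d d' %| j)%N then (d * d')%:R `^ al / j%:R `^ (2 * al) else 0.
Proof.
move=> d0 d'0 j0; rewrite dvdn_lcm.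
case: (boolP (d %| j)%N) => dj; last by rewrite /divisor_kernel (negbTE dj) mul0r.
case: (boolP (d' %| j)%N) => d'j; last by rewrite /divisor_kernel (negbTE d'j) mulr0.
rewrite !divisor_kernel_dvd // natrM powRM // (_ : 2 * al = al + al) ?powRD.
- by rewrite invfM; ring.
- by rewrite pnatr_eq0 -lt0n j0 implybT.
by ring.
Qed.

Lemma sum_divisor_kernelM al N d d' : 0 < al < 2^-1 -> (0 < d)%N -> (0 < d')%N ->
  \sum_(j < N) divisor_kernel al d j.+1 * divisor_kernel al d' j.+1 <=
  N%:R `^ (1 - 2 * al) / (1 - 2 * al) * ((gcdn d d')%:R / (d * d')%:R `^ (1 - al)).
Proof.
move=> /andP[al0 al1] d0 d'0; set l := lcmn d d'.
have l0 : (0 < l)%N by rewrite lcmn_gt0 d0.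
have dd0 : 0 < (d * d')%:R :> R by rewrite ltr0n muln_gt0 d0.
under eq_bigr do rewrite divisor_kernelM //.
rewrite -big_mkcond /= -mulr_sumr.
have s01 : 0 < 2 * al < 1 by apply/andP; split; lra.
apply: (le_trans (ler_wpM2l (powR_ge0 _ _) (sum_inv_powR_multiples_lt1 _ _ N s01 l0))).
have lg : (l * gcdn d d')%:R = (d * d')%:R :> R by rewrite muln_lcm_gcd.
have dd_pow : (d * d')%:R `^ (1 - al) * (d * d')%:R `^ al = (d * d')%:R.
  by rewrite -powRD ?(gt_eqF dd0) ?implybT // subrK powRr1 ?ltW.
rewrite le_eqVlt; apply/predU1l.
apply: (@mulfI _ ((d * d')%:R `^ (1 - al))); first by rewrite gt_eqF ?powR_gt0.
have lp : 0 < l%:R :> R by rewrite ltr0n.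
have cp : 0 < 1 - 2 * al by lra.
rewrite mulrA dd_pow -[(d * d')%:R in LHS]lg natrM.
by field; rewrite (gt_eqF lp) (gt_eqF cp) gt_eqF ?powR_gt0.
Qed.

Definition schur_weight al N m : R :=
  \sum_(k < N) divisor_kernel al k.+1 m / (k.+1)%:R `^ 2^-1.

Lemma schur_weight_gt0 al N m : (0 < N)%N -> (0 < m)%N -> 0 < schur_weight al N m.
Proof.
move=> N0 m0; rewrite /schur_weight (bigD1 (Ordinal N0)) //=.
rewrite ltr_pwDl ?sumr_ge0 // => [|k _]; last first.
  by rewrite divr_ge0 ?divisor_kernel_ge0 ?powR_ge0.
by rewrite /divisor_kernel dvd1n divn1 powR1 divr1 invr_gt0 powR_gt0 // ltr0n.
Qed.

Lemma sum_divisor_kernel_weight al D N d : 0 < al < 2^-1 ->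
  (forall n, (0 < n)%N -> (size (divisors n))%:R <= D * n%:R `^ (2^-1 - al)) ->
  (0 < d)%N ->
  \sum_(j < N) divisor_kernel al d j.+1 * schur_weight al N j.+1 <=
  N%:R `^ (1 - 2 * al) / (1 - 2 * al) * (1 + (2^-1 - al)^-1) * D / d%:R `^ 2^-1.
Proof.
move=> al01 tau_le d0; have [_ al1] := andP al01.
set t := 2^-1 - al; have t0 : 0 < t by rewrite subr_gt0.
set c := N%:R `^ (1 - 2 * al) / (1 - 2 * al).
have cp : 0 < 1 - 2 * al by lra.
have c0 : 0 <= c by rewrite divr_ge0 ?powR_ge0 ?ltW.
have dp : 0 < d%:R :> R by rewrite ltr0n.
have inner (k : 'I_N) :
    \sum_(j < N) divisor_kernel al d j.+1 * divisor_kernel al k.+1 j.+1 / (k.+1)%:R `^ 2^-1 <=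
    c / d%:R `^ (1 - al) * ((gcdn d k.+1)%:R / (k.+1)%:R `^ (1 + t)).
  have kp : 0 < (k.+1)%:R :> R by rewrite ltr0n.
  have k0 : 0 <= ((k.+1)%:R `^ 2^-1 : R)^-1 by rewrite invr_ge0 powR_ge0.
  rewrite -mulr_suml.
  apply: (le_trans (ler_wpM2r k0 (sum_divisor_kernelM al N d k.+1 al01 d0 (ltn0Sn k)))).
  rewrite natrM powRM // (_ : 1 + t = 2^-1 + (1 - al)); last by rewrite /t; ring.
  rewrite [_ `^ (2^-1 + _)]powRD ?(gt_eqF kp) ?implybT // /c le_eqVlt; apply/predU1l.
  by field; rewrite !gt_eqF ?powR_gt0.
rewrite /schur_weight; under eq_bigr do rewrite mulr_sumr.
rewrite exchange_big /=; under eq_bigr do under eq_bigr do rewrite mulrA.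
apply: le_trans (ler_sum _ (fun k _ => inner k)) _.
rewrite -mulr_sumr.
have cd0 : 0 <= c / d%:R `^ (1 - al) by rewrite divr_ge0 ?powR_ge0.
have t1_ge0 : 0 <= 1 + t^-1 by rewrite addr_ge0 ?invr_ge0 ?ltW.
apply: (le_trans (ler_wpM2l cd0 (sum_gcd_inv_powR t N d t0 d0))).
apply: (le_trans (ler_wpM2l cd0 (ler_wpM2l t1_ge0 (tau_le d d0)))).
rewrite (_ : 1 - al = 2^-1 + t); last by rewrite /t; field.
rewrite powRD ?(gt_eqF dp) ?implybT // le_eqVlt; apply/predU1l.
by field; rewrite !gt_eqF ?powR_gt0.
Qed.

Lemma gcd_kernel_sym al m n : gcd_kernel al m n = gcd_kernel al n m.
Proof. by rewrite /gcd_kernel gcdnC mulnC. Qed.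

Lemma gcd_kernel_ge0 al m n : 0 <= gcd_kernel al m n.
Proof. by rewrite /gcd_kernel divr_ge0 ?powR_ge0. Qed.

Lemma gcd_form_le al : 0 < al < 2^-1 ->
  exists C : R, forall N (x : 'I_N -> R), (0 < N)%N -> (forall i, 0 <= x i) ->
    \sum_i \sum_j x i * x j * gcd_kernel al i.+1 j.+1
      <= C * N%:R `^ (1 - 2 * al) * \sum_i x i ^+ 2.
Proof.
move=> al01; have [_ al1] := andP al01; set t := 2^-1 - al.
have t0 : 0 < t by rewrite subr_gt0.
have [D tau_le] := divisor_bound _ t0.
exists ((1 + t^-1) * D / (1 - 2 * al)) => N x N0 x0.
set lam := N%:R `^ (1 - 2 * al) / (1 - 2 * al) * (1 + t^-1) * D.
have -> : (1 + t^-1) * D / (1 - 2 * al) * N%:R `^ (1 - 2 * al) = lam.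
  by rewrite /lam; ring.
pose L (i j : 'I_N) :=
  \sum_(k < N) divisor_kernel al k.+1 i.+1 * divisor_kernel al k.+1 j.+1.
have L0 i j : 0 <= L i j by apply: sumr_ge0 => k _; rewrite mulr_ge0 ?divisor_kernel_ge0.
apply: (@le_trans _ _ (\sum_i \sum_j x i * x j * L i j)).
  apply: ler_sum => i _; apply: ler_sum => j _.
  by rewrite ler_wpM2l ?mulr_ge0 // gcd_kernel_le_sum.
apply: (@schur_test _ _ L (fun i => schur_weight al N i.+1)) => // [i j|i|i].
- by apply: eq_bigr => k _; rewrite mulrC.
- exact: schur_weight_gt0.
rewrite /L; under eq_bigr do rewrite mulr_suml.
rewrite exchange_big /= [X in _ <= lam * X]/schur_weight mulr_sumr.
apply: ler_sum => k _; under eq_bigr do rewrite -mulrA.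
rewrite -mulr_sumr mulrCA ler_wpM2l ?divisor_kernel_ge0 //.
exact: sum_divisor_kernel_weight.
Qed.

End GcdKernel.

Section HermitianForm.
Context {R : rcfType} {I : finType}.
Variables (a : I -> R[i]) (K : I -> I -> R).

Lemma conjc_eq_real (z : R[i]) : z^* = z -> z \is Num.real.
Proof. by case: z => u v [] vN; rewrite complex_real; apply/eqP; lra. Qed.

Lemma conjc_form_term (u v : R[i]) (k : R) : (u * v^* * k%:C)^*%C = v * u^* * k%:C.
Proof.
case: u => ? ?; case: v => ? ?; apply/eqP; rewrite eq_complex /=.
by apply/andP; split; apply/eqP; ring.
Qed.

Lemma hermitian_form_real : (forall i j, K i j = K j i) ->
  \sum_i \sum_j a i * (a j)^* * (K i j)%:C \is Num.real.
Proof.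
move=> Ksym; apply: conjc_eq_real; rewrite rmorph_sum exchange_big.
apply: eq_bigr => j _; rewrite rmorph_sum; apply: eq_bigr => i _ /=.
by rewrite conjc_form_term Ksym.
Qed.

Lemma norm_hermitian_form_le : (forall i j, 0 <= K i j) ->
  `|\sum_i \sum_j a i * (a j)^* * (K i j)%:C| <=
  \sum_i \sum_j `|a i| * `|a j| * (K i j)%:C.
Proof.
move=> K0; apply: le_trans (ler_norm_sum _ _ _) _; apply: ler_sum => i _.
apply: le_trans (ler_norm_sum _ _ _) _; apply: ler_sum => j _.
by rewrite !normrM normcJ [`|(K i j)%:C|]ger0_norm ?ler0c.
Qed.

End HermitianForm.

Theorem theorem2 (R : realType) (alpha : R) :
  0 < alpha -> alpha < 1 / 2 ->
  exists C : R, forall N : nat, (0 < N)%N ->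
    forall a : 'I_N -> R[i],
      \sum_(i < N) `|a i| ^+ 2 = 1 ->
      \sum_(i < N) \sum_(j < N)
          a i * (a j)^* * (gcd_kernel alpha i.+1 j.+1)%:C
        <= (C * N%:R `^ (1 - 2 * alpha))%:C.
Proof.
rewrite div1r => al0 al1; have al01 : 0 < alpha < 2^-1 by rewrite al0.
have [C formC] := gcd_form_le _ al01.
exists C => N N0 a a1.
pose x i := Num.sqrt (complex.Re (a i) ^+ 2 + complex.Im (a i) ^+ 2).
have ax i : `|a i| = (x i)%:C by rewrite normc_def.
have x1 : \sum_i x i ^+ 2 = 1.
  apply: (@complexI R); rewrite rmorph1 -a1 rmorph_sum.
  by apply: eq_bigr => i _; rewrite ax rmorphXn.
pose K (i j : 'I_N) := gcd_kernel alpha i.+1 j.+1.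
have Ksym i j : K i j = K j i by apply: gcd_kernel_sym.
have K0 i j : 0 <= K i j by apply: gcd_kernel_ge0.
apply: (le_trans (real_ler_norm (hermitian_form_real a K Ksym))).
apply: (le_trans (norm_hermitian_form_le a K K0)).
under eq_bigr do under eq_bigr do rewrite !ax -!rmorphM.
under eq_bigr do rewrite -rmorph_sum.
rewrite -rmorph_sum lecR.
by have := formC N x N0 (fun i => sqrtr_ge0 _); rewrite x1 mulr1.
Qed.
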